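(* Let $\Lambda=(0,+\infty)$ and let $K\subset\mathbb{R}^\Lambda$ be a $k$-dimensional convex cone of functions from $\Lambda$ to $\mathbb{R}$ which is closed under pointwise multiplication, i.e. $fg\in K$ for all $f,g\in K$. Then there exist unique nonempty pairwise disjoint sets $A_1,\dots,A_k\subset\Lambda$ such that every $f\in K$ can be represented as \[ f(\lambda)=\sum_{i=1}^k v_i\,\mathbb{1}_{A_i}(\lambda),\qquad v_i\in\mathbb{R}. \]
   Context: $\mathbb{1}_{A}$ denotes the indicator function of a set $A$. A $k$-dimensional convex cone means a convex cone whose linear span has dimension $k$. *)

From HB Require Import structures.
From mathcomp Require Import all_boot all_order all_algebra all_fingroup.
From mathcomp Require Import all_classical all_reals.
From mathcomp Require Import numfun.
Set Implicit Arguments. Unset Strict Implicit. Unset Printing Implicit Defensive.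
Import Order.TTheory GRing.Theory Num.Theory.
Local Open Scope ring_scope.
Local Open Scope classical_set_scope.

Definition Lam (R : realType) := {x : R | 0 < x}.

Definition lincomb (R : realType) (T : Type) (n : nat)
  (c : 'I_n -> R) (g : 'I_n -> T -> R) : T -> R :=
  fun x => \sum_(i < n) c i * g i x.

Definition in_span (R : realType) (T : Type) (K : set (T -> R)) (f : T -> R) :=
  exists n (c : 'I_n -> R) (g : 'I_n -> T -> R),
    (forall i, K (g i)) /\ f = lincomb c g.

Definition lin_indep (R : realType) (T : Type) (k : nat) (b : 'I_k -> T -> R) :=
  forall c : 'I_k -> R, lincomb c b = (fun _ => 0) -> forall i, c i = 0.

Definition span_dim (R : realType) (T : Type) (K : set (T -> R)) (k : nat) :=
  exists b : 'I_k -> T -> R,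
    lin_indep b /\ (forall i, in_span K (b i)) /\
    (forall f, in_span K f -> exists c : 'I_k -> R, f = lincomb c b).

Definition convex_cone (R : realType) (T : Type) (K : set (T -> R)) :=
  K !=set0 /\
  (forall f g, K f -> K g -> K (fun x => f x + g x)) /\
  (forall (t : R) f, 0 <= t -> K f -> K (fun x => t * f x)).

Definition mul_closed (R : realType) (T : Type) (K : set (T -> R)) :=
  forall f g, K f -> K g -> K (fun x => f x * g x).

Definition good_partition (R : realType) (T : Type) (K : set (T -> R)) (k : nat)
  (A : 'I_k -> set T) :=
  (forall i, A i !=set0) /\
  (forall i j, i != j -> A i `&` A j = set0) /\
  (forall f, K f -> exists v : 'I_k -> R,
       forall x, f x = \sum_(i < k) v i * (\1_(A i) x : R)).

From HB Require Import structures.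
From mathcomp Require Import all_boot all_order all_algebra all_fingroup.
From mathcomp Require Import all_classical all_reals.
From mathcomp Require Import numfun.
Set Implicit Arguments. Unset Strict Implicit. Unset Printing Implicit Defensive.
Import Order.TTheory GRing.Theory Num.Theory.
Local Open Scope ring_scope.
Local Open Scope classical_set_scope.

(* Let W be the span of K, a k-dimensional algebra of functions.  Since the
   evaluation rows (b_j x)_j of a basis b of W span R^k, there are k nodes X_l
   at which evaluation is injective on W, and W has a Lagrange basis e_i with
   e_i (X_l) = [l = i].  Both e_i e_j and [i = j] e_i lie in W and agree at the
   nodes, so the e_i are orthogonal idempotents: e_i is the indicator of a set
   A_i, the A_i are disjoint, and f = sum_l f (X_l) e_l on W.  If the B_i form
   another such partition, every e_l is constant on each B_i and vanishes off
   their union; as e_l (X_m) = [m = l], this forces B_i = A_(s i) for a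
   permutation s. *)

Section UnisolventPoints.
Variables (R : realType) (T : Type) (k : nat) (b : 'I_k -> T -> R).

Definition eval_row (x : T) : 'rV[R]_k := \row_j b j x.

Definition eval_mx n (X : 'I_n -> T) : 'M[R]_(n, k) := \matrix_(i, j) b j (X i).

Definition cons_pt n (x : T) (X : 'I_n -> T) : 'I_(1 + n) -> T :=
  fun i => if fintype.split i is inr j then X j else x.

Lemma eval_mx_cons n x (X : 'I_n -> T) :
  eval_mx (cons_pt x X) = col_mx (eval_row x) (eval_mx X).
Proof.
apply/matrixP => i j; rewrite !mxE /cons_pt.
by case: splitP => l _; rewrite !mxE.
Qed.

Lemma rank_eval_mx_cons n x (X : 'I_n -> T) :
  ~~ (eval_row x <= eval_mx X)%MS ->
  (\rank (eval_mx X) < \rank (eval_mx (cons_pt x X)))%N.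
Proof.
move=> xX; rewrite eval_mx_cons; apply: rank_ltmx.
by rewrite ltmxE col_mx_sub negb_and xX -addsmxE addsmxSr.
Qed.

Lemma row_full_eval_rows m (M : 'M[R]_(m, k)) :
  lin_indep b -> (forall x, (eval_row x <= M)%MS) -> row_full M.
Proof.
move=> bi evalM.
have coker0 : cokermx M = 0.
  apply/matrixP => i j; rewrite [RHS]mxE.
  apply: (bi (fun l => cokermx M l j)); apply: funext => x.
  have := evalM x; rewrite submxE => /eqP/matrixP/(_ 0 j); rewrite [RHS]mxE => <-.
  by rewrite mxE; apply: eq_bigr => l _; rewrite !mxE mulrC.
have := mxrank_coker M; rewrite coker0 mxrank0 => /esym/eqP.
by rewrite subn_eq0 /row_full eqn_leq rank_leq_col.
Qed.

Lemma exists_row_full_eval_mx :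
  lin_indep b -> exists n (X : 'I_n -> T), row_full (eval_mx X).
Proof.
move=> bi.
pose has_rank r := `[< exists n (X : 'I_n -> T), (r <= \rank (eval_mx X))%N >].
have has_rank0 : exists r, has_rank r.
  exists 0%N; apply/asboolP.
  by exists 0%N, (fun i : 'I_0 => False_rect T (notF (ltn_ord i))).
have has_rank_le r : has_rank r -> (r <= k)%N.
  by move=> /asboolP[n [X /leq_trans]]; apply; exact: rank_leq_col.
case: (ex_maxnP has_rank0 has_rank_le) => r /asboolP[n [X rX]] r_max.
exists n, X; apply: row_full_eval_rows => // x.
apply: contraT => /rank_eval_mx_cons rank_lt.
have : has_rank (\rank (eval_mx (cons_pt x X))).
  by apply/asboolP; exists (1 + n)%N, (cons_pt x X).
by move/r_max/(leq_trans rank_lt); rewrite ltnNge rX.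
Qed.

Lemma exists_unisolvent_points :
  lin_indep b -> exists X : 'I_k -> T, eval_mx X \in unitmx.
Proof.
move=> /exists_row_full_eval_mx[n [X X_full]].
exists (X \o fullrankfun X_full).
have -> : eval_mx (X \o fullrankfun X_full) = rowsub (fullrankfun X_full) (eval_mx X).
  by apply/matrixP => i j; rewrite !mxE.
exact: fullrowsub_unit.
Qed.

End UnisolventPoints.

Section LinearCombinations.
Variables (R : realType) (T : Type).

Definition is_lincomb n (g : 'I_n -> T -> R) (f : T -> R) :=
  exists c : 'I_n -> R, f = lincomb c g.

Lemma lincomb_is_lincomb n m (g : 'I_n -> T -> R) (c : 'I_m -> R) (h : 'I_m -> T -> R) :
  (forall j, is_lincomb g (h j)) -> is_lincomb g (lincomb c h).
Proof.
move=> /choice[d hd]; exists (fun i => \sum_j c j * d j i).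
apply: funext => x; rewrite /lincomb.
under eq_bigr => j _ do rewrite hd /lincomb mulr_sumr.
rewrite exchange_big /=; apply: eq_bigr => i _.
by rewrite mulr_suml; apply: eq_bigr => j _; rewrite mulrA.
Qed.

Lemma is_lincomb_trans n m (g : 'I_n -> T -> R) (h : 'I_m -> T -> R) f :
  (forall j, is_lincomb g (h j)) -> is_lincomb h f -> is_lincomb g f.
Proof. by move=> gh [c ->]; exact: lincomb_is_lincomb. Qed.

Lemma is_lincombZ n (g : 'I_n -> T -> R) (a : R) f :
  is_lincomb g f -> is_lincomb g (fun x => a * f x).
Proof.
move=> [c ->]; exists (fun i => a * c i); apply: funext => x.
by rewrite /lincomb mulr_sumr; apply: eq_bigr => i _; rewrite mulrA.
Qed.

Lemma is_lincombB n (g : 'I_n -> T -> R) f h :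
  is_lincomb g f -> is_lincomb g h -> is_lincomb g (fun x => f x - h x).
Proof.
move=> [c ->] [d ->]; exists (fun i => c i - d i); apply: funext => x.
by rewrite /lincomb -sumrB; apply: eq_bigr => i _; rewrite mulrBl.
Qed.

Lemma in_span_of (K : set (T -> R)) f : K f -> in_span K f.
Proof.
exists 1%N, (fun _ => 1), (fun _ => f); split => //.
by apply: funext => x; rewrite /lincomb big_ord1 mul1r.
Qed.

Lemma in_span_is_lincomb (K : set (T -> R)) n (g : 'I_n -> T -> R) f :
  (forall h, K h -> is_lincomb g h) -> in_span K f -> is_lincomb g f.
Proof. by move=> Kg [m [c [h [Kh ->]]]]; apply: lincomb_is_lincomb => j; exact: Kg. Qed.

Lemma lincombM_closed (P : (T -> R) -> Prop) n m
    (c : 'I_n -> R) (g : 'I_n -> T -> R) (d : 'I_m -> R) (h : 'I_m -> T -> R) :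
  (forall p (a : 'I_p -> R) u, (forall i, P (u i)) -> P (lincomb a u)) ->
  (forall i j, P (fun x => g i x * h j x)) ->
  P (fun x => lincomb c g x * lincomb d h x).
Proof.
move=> P_lincomb Pgh.
have -> : (fun x => lincomb c g x * lincomb d h x) =
          lincomb c (fun i => lincomb d (fun j x => g i x * h j x)).
  apply: funext => x; rewrite /lincomb mulr_suml; apply: eq_bigr => i _.
  rewrite -mulrA; congr (_ * _); rewrite mulr_sumr.
  by apply: eq_bigr => j _; rewrite mulrCA.
by apply: (P_lincomb) => i; apply: (P_lincomb) => j; exact: Pgh.
Qed.

Lemma span_mul_closed (K : set (T -> R)) n (b : 'I_n -> T -> R) :
  mul_closed K -> (forall i, in_span K (b i)) -> (forall f, K f -> is_lincomb b f) ->
  forall f g, is_lincomb b f -> is_lincomb b g -> is_lincomb b (fun x => f x * g x).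
Proof.
move=> mulK b_span Kb _ _ [c ->] [d ->].
apply: lincombM_closed => [p a u|i j]; first exact: lincomb_is_lincomb.
have [m [c' [u [Ku ->]]]] := b_span i; have [m' [d' [v [Kv ->]]]] := b_span j.
apply: lincombM_closed => [p a w|i' j']; first exact: lincomb_is_lincomb.
exact/Kb/mulK.
Qed.

End LinearCombinations.

Section IndicatorCombinations.
Variables (R : realType) (T : Type) (k : nat) (B : 'I_k -> set T).

Lemma lincomb_indic_out (v : 'I_k -> R) y :
  (forall i, ~ B i y) -> lincomb v (fun i => \1_(B i)) y = 0.
Proof. by move=> By; rewrite /lincomb big1 // => i _; rewrite indicE memNset ?mulr0. Qed.

Lemma is_lincomb_indic_support (f : T -> R) y :
  is_lincomb (fun i => \1_(B i)) f -> f y != 0 -> exists i, B i y.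
Proof.
move=> [v ->] fy; apply: contrapT => yB; move: fy.
by rewrite lincomb_indic_out ?eqxx // => i Biy; apply: yB; exists i.
Qed.

Hypothesis B_disjoint : forall i j, i != j -> B i `&` B j = set0.

Lemma lincomb_indic_in (v : 'I_k -> R) i y :
  B i y -> lincomb v (fun j => \1_(B j)) y = v i.
Proof.
move=> Biy; rewrite /lincomb (bigD1 i) //= indicE mem_set // mulr1.
rewrite big1 ?addr0 // => j ji; rewrite indicE memNset ?mulr0 // => Bjy.
by have := B_disjoint ji; rewrite -subset0 => /(_ y); apply.
Qed.

Lemma is_lincomb_indic_const (f : T -> R) i y z :
  is_lincomb (fun j => \1_(B j)) f -> B i y -> B i z -> f y = f z.
Proof.
by move=> [v ->] Biy Biz; rewrite !(lincomb_indic_in _ Biy, lincomb_indic_in _ Biz).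
Qed.

End IndicatorCombinations.

Section LagrangeBasis.
Variables (R : realType) (T : Type) (k : nat) (b : 'I_k -> T -> R) (X : 'I_k -> T).
Hypothesis X_unisolvent : eval_mx b X \in unitmx.

Lemma is_lincomb_eq_nodes f g : is_lincomb b f -> is_lincomb b g ->
  (forall l, f (X l) = g (X l)) -> f = g.
Proof.
move=> bf bg fg_nodes; have [c fgc] := is_lincombB bf bg.
have c0 : \col_i c i = 0.
  rewrite -[LHS](mulKmx X_unisolvent).
  suff -> : eval_mx b X *m \col_i c i = 0 by rewrite mulmx0.
  apply/matrixP => l j; rewrite !mxE.
  have /(congr1 (fun F => F (X l))) := fgc; rewrite /= fg_nodes subrr /lincomb => fgl.
  by rewrite [RHS]fgl; apply: eq_bigr => i _; rewrite !mxE mulrC.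
apply: funext => y; apply/eqP; rewrite -subr_eq0; apply/eqP.
rewrite (congr1 (fun F => F y) fgc) /lincomb big1 // => i _.
by have := congr1 (fun M : 'cV_k => M i 0) c0; rewrite !mxE => ->; rewrite mul0r.
Qed.

Definition lagrange (i : 'I_k) : T -> R :=
  lincomb (fun j => invmx (eval_mx b X) j i) b.

Lemma is_lincomb_lagrange i : is_lincomb b (lagrange i).
Proof. by exists (fun j => invmx (eval_mx b X) j i). Qed.

Lemma lagrange_node i l : lagrange i (X l) = (l == i)%:R.
Proof.
have := congr1 (fun M : 'M[R]_k => M l i) (mulmxV X_unisolvent).
rewrite !mxE => <-; rewrite /lagrange /lincomb.
by apply: eq_bigr => j _; rewrite !mxE mulrC.
Qed.

Lemma lagrange_node_diag i : lagrange i (X i) = 1.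
Proof. by rewrite lagrange_node eqxx. Qed.

Lemma lincomb_lagrange_node (a : 'I_k -> R) l : lincomb a lagrange (X l) = a l.
Proof.
rewrite /lincomb; under eq_bigr => i _ do rewrite lagrange_node mulr_natr mulrb eq_sym.
by rewrite -big_mkcond big_pred1_eq.
Qed.

Lemma lagrange_expansion f :
  is_lincomb b f -> f = lincomb (fun l => f (X l)) lagrange.
Proof.
move=> bf; apply: is_lincomb_eq_nodes => // [|l]; last by rewrite lincomb_lagrange_node.
by apply: lincomb_is_lincomb; exact: is_lincomb_lagrange.
Qed.

Definition lagrange_cell i := [set y | lagrange i y = 1].

Lemma lagrange_node_eq1 i l : lagrange i (X l) = 1 -> l = i.
Proof. by rewrite lagrange_node; case: eqVneq => // _ /eqP; rewrite eq_sym oner_eq0. Qed.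

Lemma lagrange_cells_unique (B : 'I_k -> set T) :
  (forall i j, i != j -> B i `&` B j = set0) ->
  (forall l, is_lincomb (fun i => \1_(B i)) (lagrange l)) ->
  exists s : {perm 'I_k}, forall i, B i = lagrange_cell (s i).
Proof.
move=> B_disj B_lagrange.
have lagrange_const l i y z : B i y -> B i z -> lagrange l y = lagrange l z.
  by move=> Biy Biz; exact: (is_lincomb_indic_const B_disj (B_lagrange l) Biy Biz).
have lagrange_support l y : lagrange l y != 0 -> exists i, B i y.
  exact: is_lincomb_indic_support (B_lagrange l).
have /choice[cell cellP] : forall l, exists i, B i (X l).
  by move=> l; apply: (lagrange_support l); rewrite lagrange_node_diag oner_neq0.
have cell_inj : injective cell.
  move=> l m lm; apply: (@lagrange_node_eq1 m l).
  rewrite -(lagrange_node_diag m).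
  by apply: (lagrange_const m (cell m)); [rewrite -lm|]; exact: cellP.
have cell_surj i : exists m, i = cell m.
  by exists ((perm cell_inj)^-1 i)%g; rewrite -permE permKV.
have cell_B l : B (cell l) = lagrange_cell l.
  apply/seteqP; split => y /=; rewrite /lagrange_cell /=.
    by move=> By; rewrite (lagrange_const l _ _ _ By (cellP l)) lagrange_node_diag.
  move=> ly; have [|i Biy] := lagrange_support l y; first by rewrite ly oner_neq0.
  have [m im] := cell_surj i; rewrite im in Biy.
  by rewrite -(@lagrange_node_eq1 l m) // -ly (lagrange_const l _ _ _ (cellP m) Biy).
exists ((perm cell_inj)^-1)%g => i.
by rewrite -cell_B -permE permKV.
Qed.

Hypothesis lincombM : forall f g,
  is_lincomb b f -> is_lincomb b g -> is_lincomb b (fun x => f x * g x).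

Lemma lagrangeM i j :
  (fun x => lagrange i x * lagrange j x) = (fun x => (i == j)%:R * lagrange i x).
Proof.
apply: is_lincomb_eq_nodes => [||l]; rewrite ?lagrange_node.
- exact: lincombM (is_lincomb_lagrange i) (is_lincomb_lagrange j).
- exact: is_lincombZ (is_lincomb_lagrange i).
by have [->|] := eqVneq l i; [rewrite mulr1 mul1r|rewrite mul0r mulr0].
Qed.

Lemma lagrange01 i y : lagrange i y = 0 \/ lagrange i y = 1.
Proof.
have /(congr1 (fun F => F y)) := lagrangeM i i; rewrite /= eqxx mul1r => idem.
have : lagrange i y * (lagrange i y - 1) == 0 by rewrite mulrBr mulr1 idem subrr.
by rewrite mulf_eq0 subr_eq0 => /orP[/eqP|/eqP]; [left|right].
Qed.

Lemma indic_lagrange_cell i : \1_(lagrange_cell i) = lagrange i.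
Proof.
apply: funext => y; rewrite indicE.
have [yi|yi] := lagrange01 i y; last by rewrite mem_set.
by rewrite memNset ?yi // /lagrange_cell /= yi => /eqP; rewrite eq_sym oner_eq0.
Qed.

Lemma lagrange_cells_partition (K : set (T -> R)) :
  (forall f, K f -> is_lincomb b f) -> good_partition K lagrange_cell.
Proof.
move=> Kb; split; [|split].
- by move=> i; exists (X i); exact: lagrange_node_diag.
- move=> i j ij; rewrite -subset0 => y [/= iy jy].
  have /(congr1 (fun F => F y)) := lagrangeM i j.
  by rewrite /= iy jy (negbTE ij) mulr1 mul0r => /eqP; rewrite oner_eq0.
- move=> f /Kb/lagrange_expansion ->; exists (fun l => f (X l)) => y.
  by rewrite /lincomb; apply: eq_bigr => l _; rewrite indic_lagrange_cell.
Qed.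

End LagrangeBasis.

Theorem proposition1 (R : realType) (k : nat) (K : set (Lam R -> R)) :
  convex_cone K -> span_dim K k -> mul_closed K ->
  exists A : 'I_k -> set (Lam R),
    good_partition K A /\
    (forall B : 'I_k -> set (Lam R), good_partition K B ->
       exists s : {perm 'I_k}, forall i, B i = A (s i)).
Proof.
move=> _ [b [b_indep [b_span span_b]]] mulK.
have Kb f : K f -> is_lincomb b f by move=> /in_span_of /span_b.
have [X X_unisolvent] := exists_unisolvent_points b_indep.
exists (lagrange_cell b X); split.
  exact: lagrange_cells_partition (span_mul_closed mulK b_span Kb) _ Kb.
move=> B [_ [B_disjoint B_K]].
apply: lagrange_cells_unique => // l.
apply: is_lincomb_trans (is_lincomb_lagrange b X l) => i.
apply: in_span_is_lincomb (b_span i) => f /B_K[v fv].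
by exists v; apply: funext.
Qed.
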